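(* Consider the planar Maxwell-ring potential described in the context with $\mu=0$ and $\alpha\ge 1$. Then the origin $u_0=0$ is a critical point of $V$. Moreover, for $n\ge3$, $D^2V(0)=\lambda I$ for some $\lambda>0$.
   Context: Let $n\ge 2$, $\zeta=2\pi/n$, $\mu\ge0$, $\phi_\alpha'(r)=-r^{-\alpha}$, and $s=2^{-\alpha}\sum_{j=1}^{n-1}\sin^{-(\alpha-1)}(j\zeta/2)$. The (rescaled) planar potential of a satellite attracted by $n$ unit masses at the vertices $e^{ij\zeta}$ of a regular polygon and a central mass $\mu$ at $0$ (identifying $\mathbb{R}^2=\mathbb{C}$) is $$V(u)=\frac12\|u\|^2+\sum_{j=1}^n\frac1{s+\mu}\phi_\alpha(\|u-e^{ij\zeta}\|)+\frac{\mu}{s+\mu}\phi_\alpha(\|u\|);$$ for $\mu=0$ the last term is absent. *)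

From Stdlib Require Import Reals Lra List.
From Coquelicot Require Import Coquelicot.
Import ListNotations.
Open Scope R_scope.

Definition zeta (n : nat) : R := 2 * PI / INR n.

(* An antiderivative of phi_alpha'(r) = - r^{-alpha} (for r > 0):
   phi_1(r) = - ln r ;  phi_alpha(r) = r^{1-alpha} / (alpha - 1) for alpha <> 1. *)
Definition phi (alpha r : R) : R :=
  if Req_EM_T alpha 1 then - ln r else Rpower r (1 - alpha) / (alpha - 1).

Definition s_const (n : nat) (alpha : R) : R :=
  Rpower 2 (- alpha) *
  fold_right Rplus 0
    (map (fun j : nat => Rpower (sin (INR j * zeta n / 2)) (- (alpha - 1)))
         (seq 1 (n - 1))).

Definition norm2 (x y : R) : R := sqrt (x * x + y * y).

(* The rescaled planar Maxwell-ring potential V(u), u = (x,y) = x + i y,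
   with n unit masses at e^{i j zeta}, j = 1..n, and central mass mu
   (the central term is absent when mu = 0). *)
Definition V (n : nat) (alpha mu : R) (x y : R) : R :=
  / 2 * (x * x + y * y)
  + fold_right Rplus 0
      (map (fun j : nat =>
              / (s_const n alpha + mu) *
              phi alpha (norm2 (x - cos (INR j * zeta n)) (y - sin (INR j * zeta n))))
           (seq 1 n))
  + (if Req_EM_T mu 0 then 0
     else mu / (s_const n alpha + mu) * phi alpha (norm2 x y)).

Definition dV1 (n : nat) (alpha mu : R) (x y : R) : R :=
  Derive (fun t => V n alpha mu t y) x.
Definition dV2 (n : nat) (alpha mu : R) (x y : R) : R :=
  Derive (fun t => V n alpha mu x t) y.

From Stdlib Require Import Reals Lra Lia List.
From Coquelicot Require Import Coquelicot.
Open Scope R_scope.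

(* With mu = 0 the n masses sit on the unit circle at the n-th roots of unity p_j, so at the
   origin each of them is at distance 1 and pulls with force p_j; these forces cancel because
   the roots of unity sum to zero.  Differentiating the field once more, mass j contributes
   (alpha + 1) p_j p_j^T - I, and for n >= 3 we have sum_j p_j p_j^T = (n/2) I since the
   squares e^{2 i j zeta} also sum to zero.  Hence D^2 V(0) = (1 + n (alpha - 1) / (2 s)) I,
   whose eigenvalue is at least 1 when alpha >= 1. *)

Definition lsum {A : Type} (f : A -> R) (l : list A) : R := fold_right Rplus 0 (map f l).

Section ListSums.
Context {A : Type}.

Lemma lsum_app (f : A -> R) l1 l2 : lsum f (l1 ++ l2) = lsum f l1 + lsum f l2.
Proof. unfold lsum; induction l1; simpl; [ring | rewrite IHl1; ring]. Qed.

Lemma lsum_ext (f g : A -> R) l : (forall j, In j l -> f j = g j) -> lsum f l = lsum g l.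
Proof. unfold lsum; induction l; simpl; intros H; auto. rewrite H, IHl; auto. Qed.

Lemma lsum_plus (f g : A -> R) l : lsum (fun j => f j + g j) l = lsum f l + lsum g l.
Proof. unfold lsum; induction l; simpl; [ring | rewrite IHl; ring]. Qed.

Lemma lsum_scal c (f : A -> R) l : lsum (fun j => c * f j) l = c * lsum f l.
Proof. unfold lsum; induction l; simpl; [ring | rewrite IHl; ring]. Qed.

Lemma lsum_const c (l : list A) : lsum (fun _ => c) l = c * INR (length l).
Proof.
  unfold lsum; induction l; simpl length; [simpl; ring | rewrite S_INR; simpl; rewrite IHl; ring].
Qed.

Lemma lsum_pos (f : A -> R) l : l <> nil -> (forall j, 0 < f j) -> 0 < lsum f l.
Proof.
  unfold lsum; intros Hl Hf; induction l as [|a [|b l] IH]; simpl in *.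
  - now elim Hl.
  - specialize (Hf a); lra.
  - specialize (Hf a); specialize (IH ltac:(discriminate)); lra.
Qed.

End ListSums.

Lemma differentiable_pt_lim_grad_eq f x y a b a' b' :
  differentiable_pt_lim f x y a b -> a = a' -> b = b' -> differentiable_pt_lim f x y a' b'.
Proof. now intros H -> ->. Qed.

Lemma differentiable_pt_lim_affine f x y a b :
  (forall u v, f u v = f x y + a * (u - x) + b * (v - y)) -> differentiable_pt_lim f x y a b.
Proof.
  intros E eps; apply locally_2d_forall; intros u v.
  rewrite E; replace (_ - _ - _) with 0 by ring; rewrite Rabs_R0.
  apply Rmult_le_pos; [apply Rlt_le, cond_pos |].
  unfold Rmax; destruct Rle_dec; apply Rabs_pos.
Qed.

Lemma differentiable_pt_lim_const k x y : differentiable_pt_lim (fun _ _ => k) x y 0 0.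
Proof. apply differentiable_pt_lim_affine; intros; ring. Qed.

Lemma differentiable_pt_lim_fst x y : differentiable_pt_lim (fun u _ => u) x y 1 0.
Proof. apply differentiable_pt_lim_affine; intros; ring. Qed.

Lemma differentiable_pt_lim_snd x y : differentiable_pt_lim (fun _ v => v) x y 0 1.
Proof. apply differentiable_pt_lim_affine; intros; ring. Qed.

Lemma differentiable_pt_lim_sub_fst c x y : differentiable_pt_lim (fun u _ => u - c) x y 1 0.
Proof. apply differentiable_pt_lim_affine; intros; ring. Qed.

Lemma differentiable_pt_lim_sub_snd d x y : differentiable_pt_lim (fun _ v => v - d) x y 0 1.
Proof. apply differentiable_pt_lim_affine; intros; ring. Qed.

Lemma differentiable_pt_lim_Rmult p q : differentiable_pt_lim Rmult p q q p.
Proof.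
  intros eps; exists eps; intros u v Hu Hv.
  replace (u * v - p * q - (q * (u - p) + p * (v - q))) with ((u - p) * (v - q)) by ring.
  rewrite Rabs_mult.
  apply Rmult_le_compat; try apply Rabs_pos; [lra | apply Rmax_r].
Qed.

Lemma differentiable_pt_lim_plus f g x y a b a' b' :
  differentiable_pt_lim f x y a b -> differentiable_pt_lim g x y a' b' ->
  differentiable_pt_lim (fun u v => f u v + g u v) x y (a + a') (b + b').
Proof.
  intros Hf Hg; eapply differentiable_pt_lim_grad_eq.
  - apply (differentiable_pt_lim_comp Rplus f g); [| exact Hf | exact Hg].
    apply differentiable_pt_lim_affine with (a := 1) (b := 1); intros; ring.
  - ring.
  - ring.
Qed.

Lemma differentiable_pt_lim_mult f g x y a b a' b' :
  differentiable_pt_lim f x y a b -> differentiable_pt_lim g x y a' b' ->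
  differentiable_pt_lim (fun u v => f u v * g u v) x y
    (g x y * a + f x y * a') (g x y * b + f x y * b').
Proof.
  intros Hf Hg.
  apply (differentiable_pt_lim_comp Rmult f g); [apply differentiable_pt_lim_Rmult | exact Hf | exact Hg].
Qed.

Lemma differentiable_pt_lim_comp_1d (h : R -> R) f x y d a b :
  derivable_pt_lim h (f x y) d -> differentiable_pt_lim f x y a b ->
  differentiable_pt_lim (fun u v => h (f u v)) x y (d * a) (d * b).
Proof.
  intros Hh Hf; eapply differentiable_pt_lim_grad_eq.
  - apply (differentiable_pt_lim_comp (fun p _ => h p) f f); [| exact Hf | exact Hf].
    exact (differentiable_pt_lim_proj1_0 h _ _ d Hh).
  - ring.
  - ring.
Qed.

Lemma differentiable_pt_lim_lsum {A : Type} (l : list A) (f : A -> R -> R -> R) (a b : A -> R) x y :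
  (forall j, In j l -> differentiable_pt_lim (f j) x y (a j) (b j)) ->
  differentiable_pt_lim (fun u v => lsum (fun j => f j u v) l) x y (lsum a l) (lsum b l).
Proof.
  unfold lsum; induction l as [|j l IH]; intros H; simpl.
  - apply differentiable_pt_lim_const.
  - apply (differentiable_pt_lim_plus (f j) (fun u v => fold_right Rplus 0 (map (fun j => f j u v) l)));
      [apply H; simpl; auto | apply IH; intros; apply H; simpl; auto].
Qed.

Lemma differentiable_pt_lim_norm2_sub c d x y :
  0 < (x - c) * (x - c) + (y - d) * (y - d) ->
  differentiable_pt_lim (fun u v => norm2 (u - c) (v - d)) x y
    ((x - c) / norm2 (x - c) (y - d)) ((y - d) / norm2 (x - c) (y - d)).
Proof.
  intros Hq.
  assert (Hs : 0 < norm2 (x - c) (y - d)) by now apply sqrt_lt_R0.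
  assert (Hsq : differentiable_pt_lim (fun u v => (u - c) * (u - c) + (v - d) * (v - d)) x y
                  (2 * (x - c)) (2 * (y - d))).
  { eapply differentiable_pt_lim_grad_eq.
    - apply differentiable_pt_lim_plus.
      + apply differentiable_pt_lim_mult; apply differentiable_pt_lim_sub_fst.
      + apply differentiable_pt_lim_mult; apply differentiable_pt_lim_sub_snd.
    - simpl; ring.
    - simpl; ring. }
  eapply differentiable_pt_lim_grad_eq.
  - apply (differentiable_pt_lim_comp_1d sqrt _ _ _ _ _ _ (derivable_pt_lim_sqrt _ Hq) Hsq).
  - unfold norm2 in *; field; lra.
  - unfold norm2 in *; field; lra.
Qed.

Lemma Rpower_1_l x : Rpower 1 x = 1.
Proof. unfold Rpower; rewrite ln_1, Rmult_0_r; apply exp_0. Qed.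

Lemma derivable_pt_lim_phi alpha r : 0 < r -> derivable_pt_lim (phi alpha) r (- Rpower r (- alpha)).
Proof.
  intros Hr; unfold phi; destruct (Req_EM_T alpha 1) as [-> | Ha].
  - rewrite Rpower_Ropp, Rpower_1 by exact Hr.
    apply derivable_pt_lim_ext with (mult_real_fct (-1) ln); [intros; unfold mult_real_fct; ring |].
    replace (- / r) with (-1 * / r) by ring.
    now apply derivable_pt_lim_scal, derivable_pt_lim_ln.
  - apply derivable_pt_lim_ext with (mult_real_fct (/ (alpha - 1)) (fun t => Rpower t (1 - alpha)));
      [intros; unfold mult_real_fct, Rdiv; ring |].
    replace (- Rpower r (- alpha)) with (/ (alpha - 1) * ((1 - alpha) * Rpower r (1 - alpha - 1))).
    + now apply derivable_pt_lim_scal, derivable_pt_lim_power.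
    + replace (1 - alpha - 1) with (- alpha) by ring; field; intro; apply Ha; lra.
Qed.

(* [radial alpha c d u v] is phi_alpha'(r) / r at r = |u - p|, p = (c, d): the gradient of
   phi_alpha(|u - p|) is [radial alpha c d u v * (u - p)]. *)
Definition radial (alpha c d u v : R) : R :=
  - Rpower (norm2 (u - c) (v - d)) (- alpha) / norm2 (u - c) (v - d).

Lemma differentiable_pt_lim_phi_dist alpha c d x y :
  0 < (x - c) * (x - c) + (y - d) * (y - d) ->
  differentiable_pt_lim (fun u v => phi alpha (norm2 (u - c) (v - d))) x y
    (radial alpha c d x y * (x - c)) (radial alpha c d x y * (y - d)).
Proof.
  intros Hq.
  assert (Hs : 0 < norm2 (x - c) (y - d)) by now apply sqrt_lt_R0.
  eapply differentiable_pt_lim_grad_eq.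
  - apply (differentiable_pt_lim_comp_1d (phi alpha));
      [now apply derivable_pt_lim_phi | now apply differentiable_pt_lim_norm2_sub].
  - unfold radial, Rdiv; ring.
  - unfold radial, Rdiv; ring.
Qed.

Lemma derivable_pt_lim_radial_profile alpha r : 0 < r ->
  derivable_pt_lim (fun t => - Rpower t (- alpha) / t) r ((alpha + 1) * Rpower r (- alpha) / (r * r)).
Proof.
  intros Hr.
  assert (Hdiv := derivable_pt_lim_div (opp_fct (fun t => Rpower t (- alpha))) id r _ _
    (derivable_pt_lim_opp _ _ _ (derivable_pt_lim_power r (- alpha) Hr))
    (derivable_pt_lim_id r) ltac:(unfold id; lra)).
  assert (Hpow : Rpower r (- alpha - 1) * r = Rpower r (- alpha)).
  { rewrite <- (Rpower_1 r) at 2 by exact Hr; rewrite <- Rpower_plus; f_equal; ring. }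
  replace ((alpha + 1) * Rpower r (- alpha) / (r * r))
    with ((- (- alpha * Rpower r (- alpha - 1)) * id r - 1 * opp_fct (fun t => Rpower t (- alpha)) r)
          / (id r)²).
  - exact Hdiv.
  - unfold opp_fct, id, Rsqr; rewrite <- Hpow; field; lra.
Qed.

Lemma differentiable_pt_lim_radial alpha c d x y :
  0 < (x - c) * (x - c) + (y - d) * (y - d) ->
  differentiable_pt_lim (radial alpha c d) x y
    ((alpha + 1) * Rpower (norm2 (x - c) (y - d)) (- alpha) / (norm2 (x - c) (y - d))²
       * ((x - c) / norm2 (x - c) (y - d)))
    ((alpha + 1) * Rpower (norm2 (x - c) (y - d)) (- alpha) / (norm2 (x - c) (y - d))²
       * ((y - d) / norm2 (x - c) (y - d))).
Proof.
  intros Hq.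
  apply (differentiable_pt_lim_comp_1d (fun t => - Rpower t (- alpha) / t)).
  - now apply derivable_pt_lim_radial_profile, sqrt_lt_R0.
  - now apply differentiable_pt_lim_norm2_sub.
Qed.

Section UnitVertex.
Variables (alpha c d : R).
Hypothesis unit_cd : c * c + d * d = 1.

Lemma norm2_unit_origin : norm2 (0 - c) (0 - d) = 1.
Proof. unfold norm2; replace ((0 - c) * (0 - c) + (0 - d) * (0 - d)) with 1 by lra; apply sqrt_1. Qed.

Lemma radial_unit_origin : radial alpha c d 0 0 = -1.
Proof. unfold radial; rewrite norm2_unit_origin, Rpower_1_l; field. Qed.

Lemma differentiable_pt_lim_radial_unit_origin :
  differentiable_pt_lim (radial alpha c d) 0 0 (- (alpha + 1) * c) (- (alpha + 1) * d).
Proof.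
  eapply differentiable_pt_lim_grad_eq; [apply differentiable_pt_lim_radial; lra | |];
    rewrite norm2_unit_origin, Rpower_1_l; unfold Rsqr; field.
Qed.

Lemma differentiable_pt_lim_radial_mul_fst_origin :
  differentiable_pt_lim (fun u v => radial alpha c d u v * (u - c)) 0 0
    ((alpha + 1) * c * c - 1) ((alpha + 1) * c * d).
Proof.
  eapply differentiable_pt_lim_grad_eq.
  - apply (differentiable_pt_lim_mult (radial alpha c d) (fun u _ => u - c));
      [apply differentiable_pt_lim_radial_unit_origin | apply differentiable_pt_lim_sub_fst].
  - rewrite radial_unit_origin; ring.
  - rewrite radial_unit_origin; ring.
Qed.

Lemma differentiable_pt_lim_radial_mul_snd_origin :
  differentiable_pt_lim (fun u v => radial alpha c d u v * (v - d)) 0 0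
    ((alpha + 1) * c * d) ((alpha + 1) * d * d - 1).
Proof.
  eapply differentiable_pt_lim_grad_eq.
  - apply (differentiable_pt_lim_mult (radial alpha c d) (fun _ v => v - d));
      [apply differentiable_pt_lim_radial_unit_origin | apply differentiable_pt_lim_sub_snd].
  - rewrite radial_unit_origin; ring.
  - rewrite radial_unit_origin; ring.
Qed.

End UnitVertex.

Lemma two_sin_mul_sum_cos b m :
  2 * sin b * lsum (fun j => cos (INR j * (2 * b))) (seq 1 m) = sin ((2 * INR m + 1) * b) - sin b.
Proof.
  induction m as [|m IH].
  - unfold lsum; simpl; replace ((2 * 0 + 1) * b) with b by ring; ring.
  - rewrite seq_S, lsum_app, Rmult_plus_distr_l, IH; unfold lsum; cbn [map fold_right].
    replace (INR (1 + m)) with (INR m + 1) by (rewrite S_INR; f_equal; lia).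
    rewrite S_INR.
    replace ((2 * (INR m + 1) + 1) * b) with ((INR m + 1) * (2 * b) + b) by ring.
    replace ((2 * INR m + 1) * b) with ((INR m + 1) * (2 * b) - b) by ring.
    rewrite sin_plus, sin_minus; ring.
Qed.

Lemma two_sin_mul_sum_sin b m :
  2 * sin b * lsum (fun j => sin (INR j * (2 * b))) (seq 1 m) = cos b - cos ((2 * INR m + 1) * b).
Proof.
  induction m as [|m IH].
  - unfold lsum; simpl; replace ((2 * 0 + 1) * b) with b by ring; ring.
  - rewrite seq_S, lsum_app, Rmult_plus_distr_l, IH; unfold lsum; cbn [map fold_right].
    replace (INR (1 + m)) with (INR m + 1) by (rewrite S_INR; f_equal; lia).
    rewrite S_INR.
    replace ((2 * (INR m + 1) + 1) * b) with ((INR m + 1) * (2 * b) + b) by ring.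
    replace ((2 * INR m + 1) * b) with ((INR m + 1) * (2 * b) - b) by ring.
    rewrite cos_plus, cos_minus; ring.
Qed.

Lemma sum_roots_of_unity m k : (0 < k < m)%nat ->
  lsum (fun j => cos (INR j * (2 * INR k * PI / INR m))) (seq 1 m) = 0 /\
  lsum (fun j => sin (INR j * (2 * INR k * PI / INR m))) (seq 1 m) = 0.
Proof.
  intros Hkm.
  assert (Hk : 0 < INR k) by (apply lt_0_INR; lia).
  assert (Hk' : INR k < INR m) by (apply lt_INR; lia).
  pose proof PI_RGT_0.
  set (b := INR k * PI / INR m).
  assert (Hsin : sin b <> 0).
  { apply Rgt_not_eq, sin_gt_0; unfold b.
    - apply Rdiv_lt_0_compat; nra.
    - apply Rmult_lt_reg_r with (INR m); [lra |]; unfold Rdiv; rewrite Rmult_assoc, Rinv_l; nra. }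
  assert (Hturn : (2 * INR m + 1) * b = 0 + 2 * INR k * PI + b) by (unfold b; field; lra).
  replace (2 * INR k * PI / INR m) with (2 * b) by (unfold b; field; lra).
  pose proof (two_sin_mul_sum_cos b m) as Hc; pose proof (two_sin_mul_sum_sin b m) as Hs.
  rewrite Hturn, sin_plus, cos_period, sin_period, cos_0, sin_0 in Hc.
  rewrite Hturn, cos_plus, cos_period, sin_period, cos_0, sin_0 in Hs.
  split; apply (Rmult_eq_reg_l (2 * sin b)); lra.
Qed.

Definition vertex_x (n j : nat) : R := cos (INR j * zeta n).
Definition vertex_y (n j : nat) : R := sin (INR j * zeta n).

Lemma vertex_unit n j : vertex_x n j * vertex_x n j + vertex_y n j * vertex_y n j = 1.
Proof. unfold vertex_x, vertex_y; rewrite <- (sin2_cos2 (INR j * zeta n)); unfold Rsqr; ring. Qed.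

Lemma sum_vertices n : (2 <= n)%nat ->
  lsum (vertex_x n) (seq 1 n) = 0 /\ lsum (vertex_y n) (seq 1 n) = 0.
Proof.
  intros Hn; unfold vertex_x, vertex_y, zeta.
  replace (2 * PI / INR n) with (2 * INR 1 * PI / INR n) by (simpl; field; apply not_0_INR; lia).
  apply sum_roots_of_unity; lia.
Qed.

Lemma sum_vertex_products n : (3 <= n)%nat ->
  lsum (fun j => vertex_x n j * vertex_x n j) (seq 1 n) = INR n / 2 /\
  lsum (fun j => vertex_y n j * vertex_y n j) (seq 1 n) = INR n / 2 /\
  lsum (fun j => vertex_x n j * vertex_y n j) (seq 1 n) = 0.
Proof.
  intros Hn.
  destruct (sum_roots_of_unity n 2 ltac:(lia)) as [Hcos Hsin].
  assert (Hangle : forall j, INR j * (2 * INR 2 * PI / INR n) = 2 * (INR j * zeta n)).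
  { intros j; unfold zeta; simpl; field; apply not_0_INR; lia. }
  rewrite (lsum_ext _ _ _ (fun j _ => f_equal cos (Hangle j))) in Hcos.
  rewrite (lsum_ext _ _ _ (fun j _ => f_equal sin (Hangle j))) in Hsin.
  unfold vertex_x, vertex_y; split; [|split].
  - rewrite (lsum_ext _ (fun j => / 2 * cos (2 * (INR j * zeta n)) + / 2))
      by (intros; rewrite cos_2a_cos; field).
    rewrite lsum_plus, lsum_scal, lsum_const, Hcos, length_seq; field.
  - rewrite (lsum_ext _ (fun j => - / 2 * cos (2 * (INR j * zeta n)) + / 2))
      by (intros; rewrite cos_2a_sin; field).
    rewrite lsum_plus, lsum_scal, lsum_const, Hcos, length_seq; field.
  - rewrite (lsum_ext _ (fun j => / 2 * sin (2 * (INR j * zeta n))))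
      by (intros; rewrite sin_2a; field).
    rewrite lsum_scal, Hsin; ring.
Qed.

Lemma s_const_pos n alpha : (2 <= n)%nat -> 0 < s_const n alpha.
Proof.
  intros Hn; apply Rmult_lt_0_compat; [apply exp_pos |].
  apply (lsum_pos (fun j => Rpower (sin (INR j * zeta n / 2)) (- (alpha - 1))));
    [destruct n as [|[|n]]; [lia | lia | discriminate] | intros; apply exp_pos].
Qed.

Lemma V_without_center n alpha x y :
  V n alpha 0 x y = / 2 * (x * x + y * y)
    + / s_const n alpha * lsum (fun j => phi alpha (norm2 (x - vertex_x n j) (y - vertex_y n j))) (seq 1 n).
Proof.
  unfold V; destruct (Req_EM_T 0 0) as [_ | H0]; [| now elim H0].
  rewrite <- lsum_scal, Rplus_0_r, Rplus_0_r; reflexivity.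
Qed.

Lemma differentiable_pt_lim_half_sqnorm x y :
  differentiable_pt_lim (fun u v => / 2 * (u * u + v * v)) x y x y.
Proof.
  eapply differentiable_pt_lim_grad_eq.
  - apply (differentiable_pt_lim_mult (fun _ _ => / 2)); [apply differentiable_pt_lim_const |].
    apply differentiable_pt_lim_plus;
      apply differentiable_pt_lim_mult; auto using differentiable_pt_lim_fst, differentiable_pt_lim_snd.
  - cbv beta; field.
  - cbv beta; field.
Qed.

Definition gradV1 n alpha x y : R :=
  x + / s_const n alpha
      * lsum (fun j => radial alpha (vertex_x n j) (vertex_y n j) x y * (x - vertex_x n j)) (seq 1 n).
Definition gradV2 n alpha x y : R :=
  y + / s_const n alpha
      * lsum (fun j => radial alpha (vertex_x n j) (vertex_y n j) x y * (y - vertex_y n j)) (seq 1 n).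

Lemma differentiable_pt_lim_V n alpha x y :
  (forall j, In j (seq 1 n) ->
     0 < (x - vertex_x n j) * (x - vertex_x n j) + (y - vertex_y n j) * (y - vertex_y n j)) ->
  differentiable_pt_lim (V n alpha 0) x y (gradV1 n alpha x y) (gradV2 n alpha x y).
Proof.
  intros Hq.
  eapply differentiable_pt_lim_ext;
    [apply locally_2d_forall; intros u v; symmetry; apply V_without_center |].
  eapply differentiable_pt_lim_grad_eq.
  - apply differentiable_pt_lim_plus.
    + apply differentiable_pt_lim_half_sqnorm.
    + apply (differentiable_pt_lim_mult (fun _ _ => / s_const n alpha)); [apply differentiable_pt_lim_const |].
      apply differentiable_pt_lim_lsum; intros j Hj.
      now apply differentiable_pt_lim_phi_dist, Hq.
  - unfold gradV1; cbv beta; ring.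
  - unfold gradV2; cbv beta; ring.
Qed.

Lemma off_vertices_near_origin n :
  locally_2d (fun u v => forall j, In j (seq 1 n) ->
    0 < (u - vertex_x n j) * (u - vertex_x n j) + (v - vertex_y n j) * (v - vertex_y n j)) 0 0.
Proof.
  exists (mkposreal (/ 2) ltac:(lra)); simpl; intros u v Hu Hv j _.
  rewrite Rminus_0_r in Hu, Hv; apply Rabs_def2 in Hu; apply Rabs_def2 in Hv.
  pose proof (vertex_unit n j).
  pose proof (Rle_0_sqr (2 * u - vertex_x n j)); pose proof (Rle_0_sqr (2 * v - vertex_y n j)).
  unfold Rsqr in *; nra.
Qed.

Lemma gradV_near_origin n alpha :
  locally_2d (fun u v => gradV1 n alpha u v = dV1 n alpha 0 u v /\ gradV2 n alpha u v = dV2 n alpha 0 u v) 0 0.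
Proof.
  apply locally_2d_impl with (2 := off_vertices_near_origin n), locally_2d_forall; intros u v Hq.
  destruct (differentiable_pt_lim_unique _ _ _ _ _ (differentiable_pt_lim_V n alpha u v Hq)).
  unfold dV1, dV2; auto.
Qed.

Lemma gradV_origin n alpha : (2 <= n)%nat -> gradV1 n alpha 0 0 = 0 /\ gradV2 n alpha 0 0 = 0.
Proof.
  intros Hn; destruct (sum_vertices n Hn) as [Sx Sy]; unfold gradV1, gradV2.
  split.
  - rewrite (lsum_ext _ (vertex_x n)).
    + rewrite Sx; ring.
    + intros j _; rewrite radial_unit_origin by apply vertex_unit; ring.
  - rewrite (lsum_ext _ (vertex_y n)).
    + rewrite Sy; ring.
    + intros j _; rewrite radial_unit_origin by apply vertex_unit; ring.
Qed.

Lemma V_critical_origin n alpha : (2 <= n)%nat -> differentiable_pt_lim (V n alpha 0) 0 0 0 0.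
Proof.
  intros Hn; destruct (gradV_origin n alpha Hn) as [G1 G2].
  refine (differentiable_pt_lim_grad_eq _ _ _ _ _ _ _ (differentiable_pt_lim_V n alpha 0 0 _) G1 G2).
  intros j _; pose proof (vertex_unit n j); nra.
Qed.

Definition hessian_eigenvalue n alpha : R := 1 + INR n * (alpha - 1) / (2 * s_const n alpha).

Lemma hessian_eigenvalue_pos n alpha : (2 <= n)%nat -> 1 <= alpha -> 0 < hessian_eigenvalue n alpha.
Proof.
  intros Hn Ha; pose proof (s_const_pos n alpha Hn); pose proof (pos_INR n).
  unfold hessian_eigenvalue.
  assert (0 <= INR n * (alpha - 1) / (2 * s_const n alpha)); [| lra].
  apply Rdiv_le_0_compat; nra.
Qed.

Lemma gradV1_hessian_origin n alpha : (3 <= n)%nat ->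
  differentiable_pt_lim (gradV1 n alpha) 0 0 (hessian_eigenvalue n alpha) 0.
Proof.
  intros Hn; destruct (sum_vertex_products n Hn) as (Sxx & _ & Sxy).
  pose proof (s_const_pos n alpha ltac:(lia)).
  eapply differentiable_pt_lim_grad_eq.
  - apply differentiable_pt_lim_plus; [apply differentiable_pt_lim_fst |].
    apply (differentiable_pt_lim_mult (fun _ _ => / s_const n alpha)); [apply differentiable_pt_lim_const |].
    apply differentiable_pt_lim_lsum; intros j _.
    apply differentiable_pt_lim_radial_mul_fst_origin, vertex_unit.
  - cbv beta.
    rewrite (lsum_ext (fun j => (alpha + 1) * vertex_x n j * vertex_x n j - 1)
               (fun j => (alpha + 1) * (vertex_x n j * vertex_x n j) + -1)) by (intros; ring).
    rewrite lsum_plus, lsum_scal, lsum_const, Sxx, length_seq.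
    unfold hessian_eigenvalue; field; lra.
  - cbv beta.
    rewrite (lsum_ext (fun j => (alpha + 1) * vertex_x n j * vertex_y n j)
               (fun j => (alpha + 1) * (vertex_x n j * vertex_y n j))) by (intros; ring).
    rewrite lsum_scal, Sxy; ring.
Qed.

Lemma gradV2_hessian_origin n alpha : (3 <= n)%nat ->
  differentiable_pt_lim (gradV2 n alpha) 0 0 0 (hessian_eigenvalue n alpha).
Proof.
  intros Hn; destruct (sum_vertex_products n Hn) as (_ & Syy & Sxy).
  pose proof (s_const_pos n alpha ltac:(lia)).
  eapply differentiable_pt_lim_grad_eq.
  - apply differentiable_pt_lim_plus; [apply differentiable_pt_lim_snd |].
    apply (differentiable_pt_lim_mult (fun _ _ => / s_const n alpha)); [apply differentiable_pt_lim_const |].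
    apply differentiable_pt_lim_lsum; intros j _.
    apply differentiable_pt_lim_radial_mul_snd_origin, vertex_unit.
  - cbv beta.
    rewrite (lsum_ext (fun j => (alpha + 1) * vertex_x n j * vertex_y n j)
               (fun j => (alpha + 1) * (vertex_x n j * vertex_y n j))) by (intros; ring).
    rewrite lsum_scal, Sxy; ring.
  - cbv beta.
    rewrite (lsum_ext (fun j => (alpha + 1) * vertex_y n j * vertex_y n j - 1)
               (fun j => (alpha + 1) * (vertex_y n j * vertex_y n j) + -1)) by (intros; ring).
    rewrite lsum_plus, lsum_scal, lsum_const, Syy, length_seq.
    unfold hessian_eigenvalue; field; lra.
Qed.

Theorem mainTheorem7 (n : nat) (alpha : R) :
  (2 <= n)%nat -> 1 <= alpha ->
  differentiable_pt_lim (V n alpha 0) 0 0 0 0 /\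
  ((3 <= n)%nat ->
   exists lambda : R, 0 < lambda /\
     differentiable_pt_lim (dV1 n alpha 0) 0 0 lambda 0 /\
     differentiable_pt_lim (dV2 n alpha 0) 0 0 0 lambda).
Proof.
  intros Hn Ha; split; [now apply V_critical_origin |].
  intros Hn3; exists (hessian_eigenvalue n alpha).
  split; [now apply hessian_eigenvalue_pos |].
  split.
  - apply differentiable_pt_lim_ext with (gradV1 n alpha); [| now apply gradV1_hessian_origin].
    apply locally_2d_impl with (2 := gradV_near_origin n alpha), locally_2d_forall; tauto.
  - apply differentiable_pt_lim_ext with (gradV2 n alpha); [| now apply gradV2_hessian_origin].
    apply locally_2d_impl with (2 := gradV_near_origin n alpha), locally_2d_forall; tauto.
Qed.
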